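(* Let $n\in\mathbb{N}$ and let $a=(\alpha_1,\dots,\alpha_n)$, $b=(\beta_1,\dots,\beta_n)\in\mathbb{R}^n$. Let $\mathcal{V}_a$ and $\mathcal{V}_b$ denote the convex hulls of the sets of all coordinate permutations of $a$ and of $b$, respectively, i.e. $\mathcal{V}_a=\mathrm{conv}\{(\alpha_{\pi(1)},\dots,\alpha_{\pi(n)}):\pi\in S_n\}$ and similarly for $b$. Then $\mathcal{V}_a\cap\mathcal{V}_b=\emptyset$ if and only if $\sum_{k=1}^n\alpha_k\neq\sum_{k=1}^n\beta_k$.
   Context: $S_n$ denotes the symmetric group on $\{1,\dots,n\}$. *)

From HB Require Import structures.
From mathcomp Require Import all_boot all_order all_algebra all_fingroup.
From mathcomp Require Import reals.
Set Implicit Arguments. Unset Strict Implicit. Unset Printing Implicit Defensive.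
Import Order.TTheory GRing.Theory Num.Theory.
Local Open Scope ring_scope.

Definition perm_vec (R : realType) (n : nat) (a : 'rV[R]_n) (s : 'S_n) : 'rV[R]_n :=
  \row_(i < n) a 0 (s i).

Definition conv_hull (R : realType) (n : nat) (S : 'rV[R]_n -> Prop) : 'rV[R]_n -> Prop :=
  fun x => exists (m : nat) (v : 'I_m -> 'rV[R]_n) (l : 'I_m -> R),
    [/\ forall i, S (v i), forall i, 0 <= l i, \sum_(i < m) l i = 1
      & x = \sum_(i < m) l i *: v i].

Definition permutohedron (R : realType) (n : nat) (a : 'rV[R]_n) : 'rV[R]_n -> Prop :=
  conv_hull (fun x => exists s : 'S_n, x = perm_vec a s).

From HB Require Import structures.
From mathcomp Require Import all_boot all_order all_algebra all_fingroup.
From mathcomp Require Import reals.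
Import Order.TTheory GRing.Theory Num.Theory.
Set Implicit Arguments. Unset Strict Implicit. Unset Printing Implicit Defensive.
Local Open Scope ring_scope.

(* Permuting coordinates preserves the coordinate sum, and the coordinate sum
   is linear, so it is constant on V_a; this gives one direction. Conversely,
   the barycenter of the permuted copies of a lies in V_a and is the constant
   vector with entries (sum_k a_k) / n, so it depends only on the sum of a:
   when the sums agree, it is a common point of V_a and V_b. *)

Lemma sum_perm_vec (R : realType) (n : nat) (a : 'rV[R]_n) (s : 'S_n) :
  \sum_(k < n) perm_vec a s 0 k = \sum_(k < n) a 0 k.
Proof.
under eq_bigr do rewrite mxE.
by rewrite (reindex_inj (@perm_inj _ s^-1)); apply: eq_bigr => i _; rewrite permKV.
Qed.

Lemma conv_hull_sum (R : realType) (n : nat) (S : 'rV[R]_n -> Prop) (c : R) x :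
  (forall y, S y -> \sum_(k < n) y 0 k = c) ->
  conv_hull S x -> \sum_(k < n) x 0 k = c.
Proof.
move=> Sc [m [v [l [Sv _ l1 ->]]]].
under eq_bigr do rewrite summxE.
rewrite exchange_big -[RHS]mul1r -l1 mulr_suml; apply: eq_bigr => i _.
by rewrite -(Sc _ (Sv i)) mulr_sumr; apply: eq_bigr => k _; rewrite mxE.
Qed.

Lemma permutohedron_sum (R : realType) (n : nat) (a x : 'rV[R]_n) :
  permutohedron a x -> \sum_(k < n) x 0 k = \sum_(k < n) a 0 k.
Proof. by apply: conv_hull_sum => _ [s ->]; exact: sum_perm_vec. Qed.

Lemma conv_hull_mean (R : realType) (n : nat) (T : finType) (f : T -> 'rV[R]_n) :
  (0 < #|T|)%N ->
  conv_hull (fun x => exists t, x = f t) (#|T|%:R^-1 *: \sum_t f t).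
Proof.
move=> T_gt0; exists #|T|, (fun i => f (enum_val i)), (fun=> #|T|%:R^-1); split.
- by move=> i; exists (enum_val i).
- by move=> _; rewrite invr_ge0 ler0n.
- by rewrite sumr_const card_ord -[_ *+ _]mulr_natr mulVf // pnatr_eq0 -lt0n.
- rewrite scaler_sumr -(big_enum_val (A := T) (fun t => #|T|%:R^-1 *: f t)).
  by apply: eq_bigl => t; rewrite inE.
Qed.

Definition perm_mean (R : realType) (n : nat) (a : 'rV[R]_n) : 'rV[R]_n :=
  #|{perm 'I_n}|%:R^-1 *: \sum_(s : 'S_n) perm_vec a s.

Lemma perm_mean_in_permutohedron (R : realType) (n : nat) (a : 'rV[R]_n) :
  permutohedron a (perm_mean a).
Proof. by apply: conv_hull_mean; apply/card_gt0P; exists 1%g. Qed.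

(* Composing with a transposition moves the sum over s of a (s j) to that of a (s k). *)
Lemma perm_mean_const (R : realType) (n : nat) (a : 'rV[R]_n) (j k : 'I_n) :
  perm_mean a 0 j = perm_mean a 0 k.
Proof.
rewrite !mxE !summxE; congr (_ * _).
rewrite (reindex_inj (@mulgI _ (tperm k j))).
by apply: eq_bigr => s _; rewrite !mxE permM tpermR.
Qed.

Lemma perm_mean_coord (R : realType) (n : nat) (a : 'rV[R]_n) (k : 'I_n) :
  n%:R * perm_mean a 0 k = \sum_(j < n) a 0 j.
Proof.
rewrite -(permutohedron_sum (perm_mean_in_permutohedron a)).
under [RHS]eq_bigr do rewrite (perm_mean_const a _ k).
by rewrite sumr_const card_ord mulr_natl.
Qed.

Lemma perm_mean_eq (R : realType) (n : nat) (a b : 'rV[R]_n) :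
  \sum_(k < n) a 0 k = \sum_(k < n) b 0 k -> perm_mean a = perm_mean b.
Proof.
move=> sum_ab; apply/matrixP => i k; rewrite (ord1 i).
have n_neq0 : (n%:R : R) != 0 by rewrite pnatr_eq0 -lt0n (leq_ltn_trans _ (ltn_ord k)).
by apply: (mulfI n_neq0); rewrite !perm_mean_coord.
Qed.

Theorem proposition1 (R : realType) (n : nat) (a b : 'rV[R]_n) :
  (~ exists x, permutohedron a x /\ permutohedron b x) <->
  \sum_(k < n) a 0 k != \sum_(k < n) b 0 k.
Proof.
split=> [disjoint_ab | sum_ab [x [ax bx]]].
- apply/eqP => sum_ab; apply: disjoint_ab; exists (perm_mean a).
  split; first exact: perm_mean_in_permutohedron.
  rewrite (perm_mean_eq sum_ab); exact: perm_mean_in_permutohedron.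
- by move: sum_ab; rewrite -(permutohedron_sum ax) -(permutohedron_sum bx) eqxx.
Qed.
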